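(* Let $\Re$ be a commutative Krasner hyperring with identity $1\ne0$, $\phi$ a hyperideal reduction and $\delta$ a hyperideal expansion on $L(\Re)$, and $\{M_i:i\in\Delta\}$ a directed family of $\phi$-$\delta$-primary hyperideals of $\Re$. Then $M=\bigcup_{i\in\Delta}M_i$ is a $\phi$-$\delta$-primary hyperideal of $\Re$.
   Context: Krasner hyperring: $(\Re,\oplus)$ canonical hypergroup, $(\Re,\circ)$ commutative semigroup with identity $1\ne0$, $0$ absorbing, distributive; hyperideals and $L(\Re)$ as usual. Reduction: $\phi(N)\subseteq N$, monotone, values in $L(\Re)\cup\{\emptyset\}$; expansion: $N\subseteq\delta(N)$, monotone. Directed family: for all $i,j$ there is $k$ with $M_i\cup M_j\subseteq M_k$. A proper hyperideal $N$ is $\phi$-$\delta$-primary if $a\circ b\in N$, $a\circ b\notin\phi(N)$ imply $a\in N$ or $b\in\delta(N)$. *)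

Set Implicit Arguments.

(* Commutative Krasner hyperring with identity 1 <> 0.
   [hadd x y z] means  z \in x (+) y. *)
Record KrasnerHyperring := {
  car :> Type;
  hadd : car -> car -> car -> Prop;
  zero : car;
  one : car;
  neg : car -> car;
  mul : car -> car -> car;
  hadd_nonempty : forall x y, exists z, hadd x y z;
  hadd_assoc : forall x y z w,
      (exists u, hadd x y u /\ hadd u z w) <-> (exists v, hadd y z v /\ hadd x v w);
  hadd_comm : forall x y z, hadd x y z <-> hadd y x z;
  hadd_zero : forall x z, hadd zero x z <-> z = x;
  neg_inv : forall x, hadd x (neg x) zero;
  neg_unique : forall x y, hadd x y zero -> y = neg x;
  hadd_rev : forall x y z, hadd x y z -> hadd z (neg y) x /\ hadd (neg x) z y;
  mul_assoc : forall x y z, mul x (mul y z) = mul (mul x y) z;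
  mul_comm : forall x y, mul x y = mul y x;
  mul_one : forall x, mul one x = x;
  one_neq_zero : one <> zero;
  mul_zero : forall x, mul zero x = zero;
  mul_hadd : forall a x y w,
      (exists z, hadd x y z /\ w = mul a z) <-> hadd (mul a x) (mul a y) w
}.

Section Defs.
Variable R : KrasnerHyperring.

Definition subset (A B : R -> Prop) : Prop := forall x, A x -> B x.

Definition hyperideal (N : R -> Prop) : Prop :=
  (exists x, N x) /\
  (forall a b z, N a -> N b -> hadd R a (neg R b) z -> N z) /\
  (forall r a, N a -> N (mul R r a)).

Definition proper (N : R -> Prop) : Prop := exists x, ~ N x.

Definition empty_set (x : R) : Prop := False.

Definition reduction (phi : (R -> Prop) -> (R -> Prop)) : Prop :=
  (forall N, hyperideal N -> subset (phi N) N) /\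
  (forall N K, hyperideal N -> hyperideal K -> subset N K -> subset (phi N) (phi K)) /\
  (forall N, hyperideal N -> hyperideal (phi N) \/ (forall x, ~ phi N x)).

Definition expansion (delta : (R -> Prop) -> (R -> Prop)) : Prop :=
  (forall N, hyperideal N -> subset N (delta N)) /\
  (forall N K, hyperideal N -> hyperideal K -> subset N K -> subset (delta N) (delta K)) /\
  (forall N, hyperideal N -> hyperideal (delta N)).

Definition phi_delta_primary (phi delta : (R -> Prop) -> (R -> Prop)) (N : R -> Prop) : Prop :=
  hyperideal N /\ proper N /\
  (forall a b, N (mul R a b) -> ~ phi N (mul R a b) -> N a \/ delta N b).

Definition directed (I : Type) (M : I -> R -> Prop) : Prop :=
  forall i j, exists k, subset (M i) (M k) /\ subset (M j) (M k).

Definition bigunion (I : Type) (M : I -> R -> Prop) (x : R) : Prop := exists i, M i x.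

End Defs.

Arguments subset {R}.
Arguments hyperideal {R}.
Arguments proper {R}.
Arguments reduction {R}.
Arguments expansion {R}.
Arguments phi_delta_primary {R}.
Arguments directed {R I}.
Arguments bigunion {R I}.


Set Implicit Arguments.
Unset Strict Implicit.

(* A product [a o b] lying in the union lies in some [M i]; the primary
   property of [M i] gives [a] in [M i] or [b] in [delta (M i)], and
   monotonicity of [phi] and [delta] transfers this to the union. The union
   is a hyperideal because directedness puts any two elements in a common
   [M k], and it is proper because no [M i] contains [1]. *)

Section Union.

Variable R : KrasnerHyperring.

Lemma subset_bigunion (I : Type) (M : I -> R -> Prop) (i : I) :
  subset (M i) (bigunion M).
Proof. intros x Hx. exists i. exact Hx. Qed.

Lemma hyperideal_one_full (N : R -> Prop) :
  hyperideal N -> N (one R) -> forall x, N x.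
Proof.
  intros [_ [_ Hmul]] H1 x.
  rewrite <- (mul_one R x), mul_comm. apply Hmul. exact H1.
Qed.

Lemma proper_hyperideal_one (N : R -> Prop) :
  hyperideal N -> proper N -> ~ N (one R).
Proof.
  intros Hid [x Hx] H1. apply Hx. exact (hyperideal_one_full Hid H1 x).
Qed.

Lemma hyperideal_bigunion (I : Type) (i0 : I) (M : I -> R -> Prop) :
  directed M -> (forall i, hyperideal (M i)) -> hyperideal (bigunion M).
Proof.
  intros Hdir HM. split; [|split].
  - destruct (HM i0) as [[x Hx] _]. exists x, i0. exact Hx.
  - intros a b z [i Ha] [j Hb] Hz.
    destruct (Hdir i j) as [k [Hik Hjk]].
    destruct (HM k) as [_ [Hsub _]].
    exists k. exact (Hsub a b z (Hik a Ha) (Hjk b Hb) Hz).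
  - intros r a [i Ha]. exists i. destruct (HM i) as [_ [_ Hmul]]. exact (Hmul r a Ha).
Qed.

Lemma proper_bigunion (I : Type) (M : I -> R -> Prop) :
  (forall i, hyperideal (M i) /\ proper (M i)) -> proper (bigunion M).
Proof.
  intros HM. exists (one R). intros [i H1].
  destruct (HM i) as [Hid Hprop]. exact (proper_hyperideal_one Hid Hprop H1).
Qed.

End Union.

Theorem mainTheorem17 (R : KrasnerHyperring)
  (phi delta : (R -> Prop) -> (R -> Prop))
  (Hphi : reduction phi) (Hdelta : expansion delta)
  (I : Type) (i0 : I) (M : I -> R -> Prop)
  (Hdir : directed M)
  (HM : forall i, phi_delta_primary phi delta (M i)) :
  phi_delta_primary phi delta (bigunion M).
Proof.
  destruct Hphi as [_ [phi_mono _]]. destruct Hdelta as [_ [delta_mono _]].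
  assert (Hid : hyperideal (bigunion M)).
  { apply (hyperideal_bigunion i0 Hdir). intros i. apply (HM i). }
  split; [exact Hid | split].
  - apply proper_bigunion. intros i. destruct (HM i) as [Hi [Hp _]]. split; assumption.
  - intros a b [i Hab] Hnphi.
    destruct (HM i) as [Hi [_ Hprimary]].
    pose proof (@subset_bigunion R I M i) as Hsub.
    destruct (Hprimary a b Hab) as [Ha | Hb].
    + intros Hphi_i. exact (Hnphi (phi_mono _ _ Hi Hid Hsub _ Hphi_i)).
    + left. exact (Hsub a Ha).
    + right. exact (delta_mono _ _ Hi Hid Hsub b Hb).
Qed.
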